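(* Let $n\geq 3$ be odd and $v=2(n+1)$. Then a $(K_2,K_{1,n})$-$URD(v;1,s)$ exists.
   Context: For graphs $H_1,H_2$, an $(H_1,H_2)$-$URD(v;r,s)$ is a decomposition of the edge set of the complete graph $K_v$ into edge-disjoint subgraphs (blocks), where the blocks are partitioned into $r+s$ classes, each class being a spanning collection of vertex-disjoint blocks (every vertex of $K_v$ lies in exactly one block of the class), such that $r$ classes consist only of copies of $H_1$ and $s$ classes consist only of copies of $H_2$. Here $K_2$ is a single edge and $K_{1,n}$ is the star with $n$ edges. *)

From mathcomp Require Import all_boot.
Set Implicit Arguments. Unset Strict Implicit. Unset Printing Implicit Defensive.

(* Vertices of K_v are 'I_v.  An edge is a 2-element subset of 'I_v.
   A block (subgraph of K_v) is given by its edge set : {set {set 'I_v}};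
   its vertex set is the union of its edges. *)

Definition is_edge (v : nat) (e : {set 'I_v}) : bool := #|e| == 2.

Definition block_verts (v : nat) (B : {set {set 'I_v}}) : {set 'I_v} :=
  \bigcup_(e in B) e.

Definition is_K2 (v : nat) (B : {set {set 'I_v}}) : Prop :=
  exists x y : 'I_v, x != y /\ B = [set [set x; y]].

Definition is_star (n v : nat) (B : {set {set 'I_v}}) : Prop :=
  exists (c : 'I_v) (L : {set 'I_v}),
    c \notin L /\ #|L| = n /\ B = [set [set c; l] | l in L].

Definition resolution_class (v : nat) (C : {set {set {set 'I_v}}}) : Prop :=
  forall x : 'I_v, exists! B, B \in C /\ x \in block_verts B.

(* (H1,H2)-URD(v; r, s): the edge set of K_v is decomposed into
   edge-disjoint blocks, partitioned into r+s resolution classes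
   (indexed by 'I_(r+s)); the first r classes consist of copies of H1,
   the last s of copies of H2. *)
Definition URD (v : nat) (H1 H2 : {set {set 'I_v}} -> Prop) (r s : nat) : Prop :=
  exists C : 'I_(r + s) -> {set {set {set 'I_v}}},
    [/\ forall i, resolution_class (C i),
        forall i : 'I_(r + s), i < r -> forall B, B \in C i -> H1 B,
        forall i : 'I_(r + s), r <= i -> forall B, B \in C i -> H2 B,
        forall i B e, B \in C i -> e \in B -> is_edge e
      & forall e : {set 'I_v}, is_edge e ->
          exists! p : 'I_(r + s) * {set {set 'I_v}}, p.2 \in C p.1 /\ e \in p.2].

(* Group the vertices into the n+1 pairs {2k, 2k+1}; the pairs form the K_2
   class.  Orient every edge between two different pairs from x to y when the
   pair of x precedes that of y and x, y have the same parity, or when it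
   follows it and they have different parities.  Then every vertex sends
   exactly one arc into each other pair, and every vertex outside pair k
   receives an arc from exactly one of the two vertices of pair k.  Hence the
   two out-stars centred in pair k form a K_{1,n}-factor, and these n+1
   factors together with the pairs decompose K_v. *)

From mathcomp Require Import all_boot.
From mathcomp Require Import zify.

Set Implicit Arguments.
Unset Strict Implicit.
Unset Printing Implicit Defensive.

Lemma set2_eq (T : finType) (x y a b : T) :
  [set x; y] = [set a; b] -> (x = a /\ y = b) \/ (x = b /\ y = a).
Proof.
move=> /setP E; move: (E x) (E y) (E a) (E b).
rewrite !inE !eqxx /= ?orbT => /esym/orP xab /esym/orP yab /orP axy /orP bxy.
by case: xab yab axy bxy => /eqP -> [] /eqP -> [] /eqP ? [] /eqP ?; subst; auto.
Qed.

Section PairOrientation.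

Variable n : nat.
Local Notation v := (2 * n.+1).

Fact grp_subproof (x : 'I_v) : x %/ 2 < n.+1.
Proof. by have := ltn_ord x; lia. Qed.

Definition grp (x : 'I_v) : 'I_n.+1 := Ordinal (grp_subproof x).

Fact mate_subproof (x : 'I_v) : x.+1 - 2 * (x %% 2) < v.
Proof. by have := ltn_ord x; lia. Qed.

Definition mate (x : 'I_v) : 'I_v := Ordinal (mate_subproof x).

Definition arc (x y : 'I_v) : bool :=
  ((x %/ 2 < y %/ 2) && (x %% 2 == y %% 2))
  || ((y %/ 2 < x %/ 2) && (x %% 2 != y %% 2)).

Definition out (c : 'I_v) : {set 'I_v} := [set y | arc c y].

Definition star (c : 'I_v) : {set {set 'I_v}} := [set [set c; y] | y in out c].

Lemma mateK : involutive mate.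
Proof. by move=> x; apply: ord_inj => /=; lia. Qed.

Lemma mate_neq (x : 'I_v) : x != mate x.
Proof. by apply/eqP => /(congr1 val) /=; lia. Qed.

Lemma arc_neq (x y : 'I_v) : arc x y -> x != y.
Proof. by move=> xy; apply/eqP => E; move: xy; rewrite E /arc; lia. Qed.

Lemma arc_asym (x y : 'I_v) : arc x y -> ~~ arc y x.
Proof. by rewrite /arc; lia. Qed.

Lemma arc_not_mate (x y : 'I_v) : arc x y -> (y != mate x) && (x != mate y).
Proof. by rewrite -!val_eqE /= /arc; lia. Qed.

Lemma edge_trichotomy (x y : 'I_v) :
  x != y -> [|| y == mate x, arc x y | arc y x].
Proof. by rewrite -!val_eqE /= /arc; lia. Qed.

Lemma arc_to_grp (c : 'I_v) (j : 'I_n.+1) :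
  j != grp c -> exists2 y, arc c y & grp y = j.
Proof.
move: (ltn_ord c) (ltn_ord j); rewrite -val_eqE /= => ltc ltj jc.
have lty : 2 * j + (if c %/ 2 < j then c %% 2 else 1 - c %% 2) < v.
  by case: ifP; lia.
exists (Ordinal lty); last by apply: ord_inj => /=; case: ifP; lia.
by rewrite /arc /=; case: ifP; lia.
Qed.

Lemma arc_grp_inj (c : 'I_v) : {in out c &, injective grp}.
Proof.
move=> y z; rewrite !inE /arc => cy cz /(congr1 val) /= yz.
by apply: ord_inj; lia.
Qed.

Lemma arc_grp (c y : 'I_v) : arc c y -> grp y != grp c.
Proof. by rewrite -val_eqE /= /arc; lia. Qed.

Lemma card_out (c : 'I_v) : #|out c| = n.
Proof.
rewrite -(card_in_imset (@arc_grp_inj c)).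
have -> : grp @: out c = [set~ grp c].
  apply/setP => j; rewrite !inE; apply/imsetP/idP => [[y cy ->] | jc].
    by apply: arc_grp; rewrite inE in cy.
  by have [y cy <-] := arc_to_grp jc; exists y; rewrite ?inE.
by rewrite cardsC1 card_ord.
Qed.

Lemma block_verts_star (c : 'I_v) : 0 < n -> block_verts (star c) = c |: out c.
Proof.
move=> n_gt0; apply/setP => x; rewrite /block_verts !inE.
apply/bigcupP/orP => [[e /imsetP [y /[!inE] cy ->]] /set2P [] -> | [/eqP -> | cx]].
- by left.
- by right.
- have /set0Pn [y cy] : out c != set0 by rewrite -card_gt0 card_out.
  by exists [set c; y]; [apply/imsetP; exists y | rewrite set21].
- by exists [set c; x]; [apply/imsetP; exists x; rewrite ?inE | rewrite set22].
Qed.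

Lemma centre_exists (k : 'I_n.+1) (x : 'I_v) :
  exists2 c, grp c = k & x \in c |: out c.
Proof.
have [-> | kx] := eqVneq k (grp x); first by exists x; rewrite ?setU11.
move: kx (ltn_ord x) (ltn_ord k); rewrite -val_eqE /= => kx ltx ltk.
have ltc : 2 * k + (if x %/ 2 < k then 1 - x %% 2 else x %% 2) < v.
  by case: ifP; lia.
exists (Ordinal ltc); first by apply: ord_inj => /=; case: ifP; lia.
by rewrite !inE /arc /=; apply/orP; right; case: ifP; lia.
Qed.

Lemma centre_uniq (x c c' : 'I_v) : grp c = grp c' ->
  x \in c |: out c -> x \in c' |: out c' -> c = c'.
Proof.
move=> /eqP; rewrite -val_eqE !inE -!val_eqE /= /arc => cc' xc xc'.
by apply: ord_inj; lia.
Qed.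

Definition matching_class : {set {set {set 'I_v}}} :=
  [set [set [set x; mate x]] | x : 'I_v].

Definition star_class (k : 'I_n.+1) : {set {set {set 'I_v}}} :=
  [set star c | c : 'I_v & grp c == k].

Lemma matching_class_K2 B : B \in matching_class -> is_K2 B.
Proof. by move=> /imsetP [x _ ->]; exists x, (mate x); rewrite mate_neq. Qed.

Lemma star_class_star k B : B \in star_class k -> is_star n B.
Proof.
move=> /imsetP [c _ ->]; exists c, (out c); split; last by rewrite card_out.
by rewrite inE; apply/negP => /arc_neq; rewrite eqxx.
Qed.

Lemma matching_class_edge B e : B \in matching_class -> e \in B -> is_edge e.
Proof. by move=> /imsetP [x _ ->] /set1P ->; rewrite /is_edge cards2 mate_neq. Qed.

Lemma star_class_edge k B e : B \in star_class k -> e \in B -> is_edge e.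
Proof.
move=> /imsetP [c _ ->] /imsetP [y /[!inE] /arc_neq cy ->].
by rewrite /is_edge cards2 cy.
Qed.

Lemma matching_class_resolution : resolution_class matching_class.
Proof.
move=> x; exists [set [set x; mate x]]; split.
  by split; [apply/imsetP; exists x | rewrite /block_verts big_set1 set21].
move=> _ [/imsetP [y _ ->]]; rewrite /block_verts big_set1 => /set2P [] -> //.
by rewrite mateK setUC.
Qed.

Lemma star_class_resolution (k : 'I_n.+1) :
  0 < n -> resolution_class (star_class k).
Proof.
move=> n_gt0 x; have [c ck xc] := centre_exists k x.
exists (star c); split.
  by split; [apply/imsetP; exists c; rewrite ?inE ?ck | rewrite block_verts_star].
move=> _ [/imsetP [c' /[!inE] /eqP c'k ->]]; rewrite block_verts_star // => xc'.
by rewrite (@centre_uniq x c c') // ck c'k.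
Qed.

Definition urd_class (i : 'I_(1 + n.+1)) : {set {set {set 'I_v}}} :=
  match split i with inl _ => matching_class | inr k => star_class k end.

Lemma urd_class_lshift : urd_class (lshift n.+1 ord0) = matching_class.
Proof. by rewrite /urd_class (unsplitK (inl ord0)). Qed.

Lemma urd_class_rshift (k : 'I_n.+1) : urd_class (rshift 1 k) = star_class k.
Proof. by rewrite /urd_class (unsplitK (inr k)). Qed.

Lemma urd_class_lt1 (i : 'I_(1 + n.+1)) : i < 1 -> urd_class i = matching_class.
Proof. by rewrite /urd_class; case: splitP. Qed.

Lemma urd_class_ge1 (i : 'I_(1 + n.+1)) :
  1 <= i -> exists k, urd_class i = star_class k.
Proof. by rewrite leqNgt /urd_class; case: splitP => // k; exists k. Qed.

Definition owner (x y : 'I_v) : 'I_(1 + n.+1) * {set {set 'I_v}} :=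
  if y == mate x then (lshift n.+1 (ord0 : 'I_1), [set [set x; y]])
  else if arc x y then (rshift 1 (grp x), star x)
  else (rshift 1 (grp y), star y).

Lemma owner_mem (x y : 'I_v) : x != y ->
  (owner x y).2 \in urd_class (owner x y).1 /\ [set x; y] \in (owner x y).2.
Proof.
move=> xy; rewrite /owner.
case: eqP => [-> | /eqP ymx].
  by rewrite /= urd_class_lshift; split; [apply/imsetP; exists x | rewrite set11].
have := edge_trichotomy xy; rewrite (negPf ymx) /= => yx.
case: ifP => [xy' | nxy]; rewrite /= urd_class_rshift; split; apply/imsetP.
- by exists x; rewrite ?inE.
- by exists y; rewrite ?inE.
- by exists y; rewrite ?inE.
- by exists x; rewrite 1?setUC ?inE // -(orFb (arc y x)) -nxy.
Qed.

Lemma owner_uniq (x y : 'I_v) p :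
  p.2 \in urd_class p.1 -> [set x; y] \in p.2 -> p = owner x y.
Proof.
case: p => i B /= + xyB; case: (splitP i) => [j i0 | k ik].
  have -> : i = lshift n.+1 ord0 by apply: ord_inj; rewrite i0 (ord1 j).
  rewrite urd_class_lshift => /imsetP [a _ BE]; move: xyB; rewrite BE /owner.
  by move=> /set1P /set2_eq [[-> ->] | [-> ->]]; rewrite ?mateK eqxx // setUC.
have -> : i = rshift 1 k by apply: ord_inj.
rewrite urd_class_rshift => /imsetP [c /[!inE] /eqP <- BE].
move: xyB; rewrite BE => /imsetP [l /[!inE] cl].
have /andP [lc cl'] := arc_not_mate cl.
move=> /set2_eq [[-> ->] | [-> ->]]; rewrite /owner.
- by rewrite (negPf lc) cl.
- by rewrite (negPf cl') (negPf (arc_asym cl)).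
Qed.

End PairOrientation.

Theorem lemma11 (n : nat) (Hn : 3 <= n) (Hodd : odd n) :
  exists s : nat, URD (@is_K2 (2 * n.+1)) (@is_star n (2 * n.+1)) 1 s.
Proof.
have n_gt0 : 0 < n by lia.
exists n.+1, (@urd_class n); split.
- move=> i; case: (ltnP i 1) => [/urd_class_lt1 -> | /urd_class_ge1 [k ->]].
    exact: matching_class_resolution.
  exact: star_class_resolution.
- by move=> i /urd_class_lt1 -> B /matching_class_K2.
- by move=> i /urd_class_ge1 [k ->] B /star_class_star.
- move=> i B e; case: (ltnP i 1) => [/urd_class_lt1 -> | /urd_class_ge1 [k ->]].
    exact: matching_class_edge.
  exact: star_class_edge.
- move=> e /cards2P [x [y [xy ->]]].
  exists (owner x y); split; first exact: owner_mem.
  by move=> p [pB xyp]; rewrite (owner_uniq pB xyp).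
Qed.
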